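(* Let $\mathsf{Mono(Ab)}$ denote the full subcategory of $\mathsf{PreOrdGrp}$ consisting of the preordered groups $(G,P_G)$ with $G$ abelian and $P_G$ a subgroup of $G$. The inclusion $U\colon\mathsf{Mono(Ab)}\to\mathsf{PreOrdGrp}$ has a left adjoint $F$ given on objects by $F(G,P_G)=(G/[G,G],\ grp(\eta_G(P_G)))$, where $\eta_G\colon G\to G/[G,G]$ is the abelianization quotient and $grp(\eta_G(P_G))$ is identified with the subgroup $\{x-y : x,y\in\eta_G(P_G)\}$ of $G/[G,G]$; the $(G,P_G)$-component of the unit is the morphism given by $\eta_G$ (with restriction $P_G\to grp(\eta_G(P_G))$, $p\mapsto\eta_G(p)$).
   Context: A preordered group is a pair $(G,P_G)$ with $G$ an additively written group (not necessarily abelian) and $P_G\subseteq G$ a submonoid closed under conjugation; morphisms $(G,P_G)\to(H,P_H)$ are group homomorphisms $f$ with $f(P_G)\subseteq P_H$. This is the category $\mathsf{PreOrdGrp}$. For a commutative monoid $M$, $grp(M)$ denotes its group completion; for a submonoid $M$ of an abelian group $X$ it is isomorphic to the subgroup $\{a-b : a,b\in M\}$ of $X$. *)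

Record group := Group {
  carrier :> Type;
  gadd : carrier -> carrier -> carrier;
  gopp : carrier -> carrier;
  gzero : carrier;
  gaddA : forall x y z, gadd x (gadd y z) = gadd (gadd x y) z;
  gadd0l : forall x, gadd gzero x = x;
  gadd0r : forall x, gadd x gzero = x;
  gaddNl : forall x, gadd (gopp x) x = gzero;
  gaddNr : forall x, gadd x (gopp x) = gzero
}.

Arguments gadd {g} _ _.
Arguments gopp {g} _.
Arguments gzero {g}.

Definition gsub {G : group} (x y : G) : G := gadd x (gopp y).

Definition is_hom {G H : group} (f : G -> H) : Prop :=
  forall x y : G, f (gadd x y) = gadd (f x) (f y).

Definition abelian (G : group) : Prop := forall x y : G, gadd x y = gadd y x.

Definition submonoid {G : group} (P : G -> Prop) : Prop :=
  P gzero /\ forall x y, P x -> P y -> P (gadd x y).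

Definition subgroup {G : group} (P : G -> Prop) : Prop :=
  P gzero /\ (forall x y, P x -> P y -> P (gadd x y)) /\ (forall x, P x -> P (gopp x)).

(* P_G : submonoid closed under conjugation: (G,P) is an object of PreOrdGrp *)
Definition preordered {G : group} (P : G -> Prop) : Prop :=
  submonoid P /\ forall g x, P x -> P (gadd (gadd g x) (gopp g)).

Definition preord_morph {G H : group} (P : G -> Prop) (Q : H -> Prop) (f : G -> H) : Prop :=
  is_hom f /\ forall x, P x -> Q (f x).

Definition mono_ab (G : group) (P : G -> Prop) : Prop := abelian G /\ subgroup P.

Definition commutator {G : group} (x y : G) : G :=
  gadd (gadd (gadd (gopp x) (gopp y)) x) y.

Inductive in_commutator_subgroup (G : group) : G -> Prop :=
| ics_zero : in_commutator_subgroup G gzero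
| ics_comm : forall x y, in_commutator_subgroup G (commutator x y)
| ics_add : forall a b, in_commutator_subgroup G a -> in_commutator_subgroup G b ->
            in_commutator_subgroup G (gadd a b)
| ics_opp : forall a, in_commutator_subgroup G a -> in_commutator_subgroup G (gopp a).

Definition abelianization_quotient {G A : group} (eta : G -> A) : Prop :=
  is_hom eta /\ (forall a : A, exists x, eta x = a) /\
  (forall x, eta x = gzero <-> in_commutator_subgroup G x).

Definition grp_image {G A : group} (eta : G -> A) (P : G -> Prop) (a : A) : Prop :=
  exists x y, P x /\ P y /\ a = gsub (eta x) (eta y).

From Stdlib Require Import ClassicalEpsilon.

(* The abelianization eta is surjective with kernel [G,G], so a morphism f
   into an abelian group H, which kills every commutator, factors uniquely
   through eta.  If moreover H carries a subgroup Q containing f(P), then the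
   factorization maps each eta x - eta y with x, y in P into Q; and the
   differences of elements of eta(P) form a subgroup of the abelian group A
   because eta(P) is a submonoid. *)

Section GroupLemmas.
Variable G : group.
Implicit Types x y z : G.

Lemma gaddI x y z : gadd x y = gadd x z -> y = z.
Proof.
  intro E.
  rewrite <- (gadd0l _ y), <- (gadd0l _ z), <- (gaddNl _ x), <- !gaddA, E.
  reflexivity.
Qed.

Lemma gopp_uniq x y : gadd x y = gzero -> y = gopp x.
Proof. intro E. apply (gaddI x). rewrite E, gaddNr. reflexivity. Qed.

Lemma goppK x : gopp (gopp x) = x.
Proof. symmetry. apply gopp_uniq, gaddNl. Qed.

Lemma goppD x y : gopp (gadd x y) = gadd (gopp y) (gopp x).
Proof.
  symmetry. apply gopp_uniq.
  rewrite <- gaddA, (gaddA _ y), gaddNr, gadd0l, gaddNr. reflexivity.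
Qed.

Lemma gopp0 : gopp (gzero : G) = gzero.
Proof. symmetry. apply gopp_uniq, gadd0l. Qed.

Lemma gsub_eq0 x y : gsub x y = gzero -> x = y.
Proof.
  unfold gsub. intro E.
  rewrite <- (gadd0r _ x), <- (gaddNl _ y), gaddA, E, gadd0l. reflexivity.
Qed.

Lemma commutator_eq0 x y : commutator x y = gzero <-> gadd x y = gadd y x.
Proof.
  unfold commutator.
  rewrite <- (gaddA _ (gadd (gopp x) (gopp y))), <- goppD.
  split.
  - intro E. apply gopp_uniq in E. rewrite goppK in E. exact E.
  - intro E. rewrite E. apply gaddNl.
Qed.

Lemma commutator_abelian : abelian G -> forall x y, commutator x y = gzero.
Proof. intros ab x y. apply commutator_eq0, ab. Qed.

End GroupLemmas.

Section HomLemmas.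
Variables G H : group.
Variable f : G -> H.
Hypothesis f_hom : is_hom f.

Lemma hom0 : f gzero = gzero.
Proof. apply (gaddI _ (f gzero)). rewrite <- f_hom, !gadd0r. reflexivity. Qed.

Lemma homN x : f (gopp x) = gopp (f x).
Proof. apply gopp_uniq. rewrite <- f_hom, gaddNr. exact hom0. Qed.

Lemma homB x y : f (gsub x y) = gsub (f x) (f y).
Proof. unfold gsub. rewrite f_hom, homN. reflexivity. Qed.

Lemma hom_commutator x y : f (commutator x y) = commutator (f x) (f y).
Proof. unfold commutator. rewrite !f_hom, !homN. reflexivity. Qed.

Lemma hom_commutator_subgroup :
  abelian H -> forall x, in_commutator_subgroup G x -> f x = gzero.
Proof.
  intros ab x Hx. induction Hx as [| x y | a b _ IHa _ IHb | a _ IHa].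
  - exact hom0.
  - rewrite hom_commutator. apply commutator_abelian, ab.
  - rewrite f_hom, IHa, IHb, gadd0l. reflexivity.
  - rewrite homN, IHa. apply gopp0.
Qed.

End HomLemmas.

Section Abelianization.
Variables G A : group.
Variable eta : G -> A.
Hypothesis eta_ab : abelianization_quotient eta.

Lemma abelianization_abelian : abelian A.
Proof.
  destruct eta_ab as [eta_hom [eta_surj eta_ker]].
  intros a b. destruct (eta_surj a) as [x <-], (eta_surj b) as [y <-].
  apply commutator_eq0. rewrite <- hom_commutator by exact eta_hom.
  apply eta_ker. constructor.
Qed.

Lemma abelianization_factor (H : group) (f : G -> H) :
  is_hom f -> abelian H ->
  exists g : A -> H, is_hom g /\ forall x, g (eta x) = f x.
Proof.
  intros f_hom abH. destruct eta_ab as [eta_hom [eta_surj eta_ker]].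
  assert (f_compat : forall x y, eta x = eta y -> f x = f y).
  { intros x y E. apply gsub_eq0. rewrite <- homB by exact f_hom.
    apply (hom_commutator_subgroup _ _ f f_hom abH), eta_ker.
    rewrite homB, E by exact eta_hom. apply gaddNr. }
  pose (g a := f (proj1_sig (constructive_indefinite_description _ (eta_surj a)))).
  assert (g_eta : forall x, g (eta x) = f x).
  { intro x. unfold g.
    destruct (constructive_indefinite_description _ _) as [x' Ex']. simpl.
    apply f_compat, Ex'. }
  exists g. split; [| exact g_eta].
  intros a b. destruct (eta_surj a) as [x <-], (eta_surj b) as [y <-].
  rewrite <- eta_hom, !g_eta. apply f_hom.
Qed.

End Abelianization.

Section GroupCompletion.
Variables G A : group.
Variable eta : G -> A.
Hypothesis eta_hom : is_hom eta.
Variable P : G -> Prop.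
Hypothesis P_submonoid : submonoid P.

Lemma grp_image_subgroup : abelian A -> subgroup (grp_image eta P).
Proof.
  intro abA. destruct P_submonoid as [P0 Padd]. split; [| split].
  - exists gzero, gzero. unfold gsub. rewrite gaddNr. auto.
  - intros a b [x [y [Px [Py ->]]]] [x' [y' [Px' [Py' ->]]]].
    exists (gadd x x'), (gadd y y'). repeat split; auto.
    unfold gsub. rewrite !eta_hom, (goppD _ (eta y)), (abA (gopp (eta y'))).
    rewrite <- !gaddA. f_equal. rewrite !gaddA. f_equal. apply abA.
  - intros a [x [y [Px [Py ->]]]]. exists y, x. repeat split; auto.
    unfold gsub. rewrite goppD, goppK. reflexivity.
Qed.

Lemma grp_image_eta x : P x -> grp_image eta P (eta x).
Proof.
  intro Px. exists x, gzero. repeat split; [exact Px | apply P_submonoid |].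
  unfold gsub. rewrite (hom0 _ _ eta eta_hom), gopp0, gadd0r. reflexivity.
Qed.

Lemma hom_grp_image (H : group) (Q : H -> Prop) (g : A -> H) :
  is_hom g -> subgroup Q -> (forall x, P x -> Q (g (eta x))) ->
  forall a, grp_image eta P a -> Q (g a).
Proof.
  intros g_hom [_ [Qadd Qopp]] gP a [x [y [Px [Py ->]]]].
  rewrite (homB _ _ g g_hom). apply Qadd; [| apply Qopp]; apply gP; assumption.
Qed.

End GroupCompletion.

Theorem proposition5p1 (G : group) (P : G -> Prop) (HP : preordered P)
  (A : group) (eta : G -> A) (Heta : abelianization_quotient eta) :
  (* F(G,P) = (A, grp(eta(P))) is an object of Mono(Ab) *)
  mono_ab A (grp_image eta P) /\
  (* the unit component eta : (G,P) -> U F (G,P) is a morphism of PreOrdGrp *)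
  preord_morph P (grp_image eta P) eta /\
  (* universal property of the unit *)
  (forall (H : group) (Q : H -> Prop), mono_ab H Q ->
   forall f : G -> H, preord_morph P Q f ->
     (exists g : A -> H, preord_morph (grp_image eta P) Q g /\
                         forall x, g (eta x) = f x) /\
     (forall g1 g2 : A -> H,
        preord_morph (grp_image eta P) Q g1 -> preord_morph (grp_image eta P) Q g2 ->
        (forall x, g1 (eta x) = f x) -> (forall x, g2 (eta x) = f x) ->
        forall a, g1 a = g2 a)).
Proof.
  destruct HP as [P_submonoid _].
  pose proof (abelianization_abelian _ _ _ Heta) as abA.
  pose proof Heta as [eta_hom [eta_surj _]].
  split; [| split].
  - split; [exact abA | exact (grp_image_subgroup _ _ _ eta_hom _ P_submonoid abA)].
  - split; [exact eta_hom |]. exact (grp_image_eta _ _ _ eta_hom _ P_submonoid).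
  - intros H Q [abH Q_subgroup] f [f_hom fPQ]. split.
    + destruct (abelianization_factor _ _ _ Heta H f f_hom abH) as [g [g_hom g_eta]].
      exists g. split; [split |]; [exact g_hom | | exact g_eta].
      apply (hom_grp_image _ _ eta P _ Q g g_hom Q_subgroup).
      intros x Px. rewrite g_eta. apply fPQ, Px.
    + intros g1 g2 _ _ g1_eta g2_eta a. destruct (eta_surj a) as [x <-].
      rewrite g1_eta, g2_eta. reflexivity.
Qed.
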